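(* For each natural number $n\ge 1$: (i) the total domination polynomial of the $n$-book graph $B_n$ is unimodal; (ii) the total domination polynomial of the generalized friendship graph $F_{n,4}$ is unimodal.
   Context: The $n$-book graph $B_n$ is obtained by taking $n$ copies of the cycle $C_4$ that all share one common edge $\{u,v\}$. The generalized friendship graph $F_{n,q}$ consists of $n$ cycles of length $q$ sharing exactly one common vertex; $F_{n,4}$ is the case $q=4$. For a finite simple graph $G=(V,E)$, a set $D\subseteq V$ is a total dominating set if every vertex of $V$ is adjacent to some vertex of $D$; $d_t(G,i)$ is the number of total dominating sets of size $i$, and $D_t(G,x)=\sum_{i} d_t(G,i)x^i$. A polynomial $\sum a_ix^i$ is unimodal if $a_0\le\dots\le a_k\ge a_{k+1}\ge\dots\ge a_N$ for some $k$. *)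

From mathcomp Require Import all_boot all_order all_algebra.
Set Implicit Arguments. Unset Strict Implicit. Unset Printing Implicit Defensive.
Import GRing.Theory Num.Theory.
Local Open Scope ring_scope.

(* A finite simple graph is a symmetric irreflexive boolean relation on a finType. *)

Definition total_dominating (T : finType) (e : rel T) (D : {set T}) : bool :=
  [forall x : T, [exists y in D, e x y]].

Definition dt (T : finType) (e : rel T) (i : nat) : nat :=
  #|[set D : {set T} | total_dominating e D & #|D| == i]|.

Definition Dt (T : finType) (e : rel T) : {poly int} :=
  \sum_(i < #|T|.+1) ((dt e i)%:R) *: 'X^i.

Definition unimodal (p : {poly int}) : Prop :=
  exists k : nat,
    (forall i : nat, (i < k)%N -> p`_i <= p`_i.+1) /\
    (forall i : nat, (k <= i)%N -> (i.+1 < size p)%N -> p`_i.+1 <= p`_i).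

(* ---------- The n-book graph B_n ----------
   Vertices: inl 0 = u, inl 1 = v, inr (j,false) = x_j, inr (j,true) = y_j.
   The j-th 4-cycle is u - v - y_j - x_j - u, all sharing the edge {u,v}. *)
Definition book_vertex (n : nat) := ('I_2 + ('I_n * bool))%type.

Definition book_adj0 (n : nat) (a b : book_vertex n) : bool :=
  match a, b with
  | inl i, inl i' => (val i == 0%N) && (val i' == 1%N)
  | inl i, inr (j, s) => if val i == 0%N then ~~ s else s        (* u ~ x_j, v ~ y_j *)
  | inr (j, s), inr (j', s') => (j == j') && ~~ s && s'
  | _, _ => false
  end.

Definition book_adj (n : nat) : rel (book_vertex n) :=
  fun a b => book_adj0 a b || book_adj0 b a.

(* ---------- The generalized friendship graph F_{n,4} ----------
   Vertices: None = centre c, Some (j,t) for t in {0,1,2}.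
   The j-th 4-cycle is c - (j,0) - (j,1) - (j,2) - c. *)
Definition friend_vertex (n : nat) := option ('I_n * 'I_3).

Definition friend_adj0 (n : nat) (a b : friend_vertex n) : bool :=
  match a, b with
  | None, Some (_, t) => (val t == 0%N) || (val t == 2%N)
  | Some (j, t), Some (j', t') => (j == j') && (val t'== (val t).+1)
  | _, _ => false
  end.

Definition friend_adj (n : nat) : rel (friend_vertex n) :=
  fun a b => friend_adj0 a b || friend_adj0 b a.

From mathcomp Require Import all_boot all_order all_algebra.
From mathcomp Require Import zify ring lra.
Set Implicit Arguments. Unset Strict Implicit. Unset Printing Implicit Defensive.
Import Order.TTheory GRing.Theory Num.Theory.

(* Writing G_m = (x+1)^(m+1) + x^m, a direct count of total dominating sets
   (each page, resp. cycle, is chosen independently once the shared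
   vertices are fixed) gives the closed forms
       D_t(B_(m+1), x)    = x^2 G_m(x)^2,
       D_t(F_(m+1,4), x)  = x^(m+2) (x+2)^(m+1) G_m(x).
   Both are then unimodal for different reasons:
   - a polynomial with nonnegative log-concave coefficients and no internal
     zeros is unimodal, this class contains 1 and is stable under
     multiplication by x + a (a > 0), and G_m belongs to it; this settles
     F_{n,4};
   - the coefficients of G_m^2 are explicit sums of binomial coefficients,
     shown to increase up to index m+1 and decrease afterwards (by a
     Vandermonde estimate for m >= 7, by computation for m <= 6); this
     settles B_n.
   Multiplying by a power of x preserves unimodality in both cases. *)

Section LogConcavity.
Local Open Scope ring_scope.

Definition lc_nz (p : {poly int}) : Prop :=
  [/\ forall k, 0 <= p`_k,
      forall k, p`_k * p`_k.+2 <= p`_k.+1 ^+ 2 &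
      forall i j l, (i <= j)%N -> (j <= l)%N -> 0 < p`_i -> 0 < p`_l -> 0 < p`_j].

Lemma unimodal_at (p : {poly int}) (m : nat) :
  (forall i, (i < m)%N -> p`_i <= p`_i.+1) ->
  (forall i, (m <= i)%N -> p`_i.+1 <= p`_i) -> unimodal p.
Proof. by move=> up down; exists m; split=> // i /down. Qed.

Lemma unimodal_mulXn (p : {poly int}) (k : nat) :
  (forall i, 0 <= p`_i) -> unimodal p -> unimodal ('X^k * p).
Proof.
move=> p_ge0 [m [up down]]; exists (k + m)%N; split=> i hi; rewrite !coefXnM.
- have [ik|ki] := ltnP i k; last first.
    by rewrite ltnNge leqW //= subSn // up //; lia.
  by case: ltnP => [//|ik1]; rewrite (_ : i.+1 - k = 0)%N ?p_ge0 //; lia.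
- have [->|pn0] := eqVneq p 0; first by rewrite !coef0 !if_same.
  rewrite mulrC size_mulXn // => hs.
  rewrite ltnNge leqW; last by lia.
  by rewrite ltnNge (_ : (k <= i)%N) /=; [rewrite subSn ?down //; lia | lia].
Qed.

Definition prev_coef (p : {poly int}) (k : nat) : int :=
  if k is k'.+1 then p`_k' else 0.

(* The coefficients of (X + a) p, which is the operation log-concavity
   has to survive. *)
Lemma coef_mulXaddC (a : int) (p : {poly int}) k :
  (('X + a%:P) * p)`_k = prev_coef p k + a * p`_k.
Proof. by rewrite mulrDl coefD coefXM coefCM; case: k. Qed.

Section LogConcaveFacts.
Variable p : {poly int}.
Hypothesis p_lc : lc_nz p.

(* Once the coefficients have strictly descended after a positive one, log-
   concavity (or, on a zero, the absence of internal zeros) forces them to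
   keep descending. *)
Lemma lc_nz_descent i k :
  (i <= k)%N -> 0 < p`_i -> p`_k.+1 <= p`_k -> p`_k.+2 <= p`_k.+1.
Proof.
case: p_lc => ge0 lc nz ik pi_gt0 dec.
have := ge0 k.+1; rewrite le0r => /orP[/eqP y0 | y_gt0].
  rewrite y0 leNgt; apply/negP => z_gt0.
  by have := nz i k.+1 k.+2 (leqW ik) (leqnSn _) pi_gt0 z_gt0; rewrite y0 ltxx.
rewrite -(ler_pM2l y_gt0) -expr2; apply: le_trans (lc k).
exact: (ler_wpM2r (ge0 _) dec).
Qed.

(* Log-concave sequences without internal zeros are unimodal: the peak is
   the first index after which the coefficients strictly decrease. *)
Lemma lc_nz_unimodal : unimodal p.
Proof.
have [->|pn0] := eqVneq p 0; first by exists 0%N; split=> i; rewrite !coef0.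
have [ge0 _ _] := p_lc.
have drop : exists i, p`_i.+1 < p`_i.
  exists (size p).-1; rewrite prednK ?size_poly_gt0 // nth_default //.
  by rewrite lt_def ge0 andbT -/(lead_coef p) lead_coef_eq0.
have [m m_drop m_first] := ex_minnP drop.
apply: (unimodal_at (m := m)) => [i im | i].
  by rewrite leNgt; apply/negP => /m_first; rewrite leqNgt im.
move/subnKC <-; elim: (i - m)%N => [|d IH]; first by rewrite addn0 ltW.
rewrite addnS; apply: (lc_nz_descent (leq_addr d m)) IH.
exact: le_lt_trans (ge0 _) m_drop.
Qed.

Lemma lc_nz_gap3 k : p`_k * p`_k.+3 <= p`_k.+1 * p`_k.+2.
Proof.
case: p_lc => ge0 lc nz.
have := ge0 k; rewrite le0r => /orP[/eqP-> | pk_gt0]; first by rewrite mul0r mulr_ge0.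
have := ge0 k.+3; rewrite le0r => /orP[/eqP-> | pk3_gt0]; first by rewrite mulr0 mulr_ge0.
have y_gt0 : 0 < p`_k.+1 by apply: (nz k k.+1 k.+3) => //; lia.
have z_gt0 : 0 < p`_k.+2 by apply: (nz k k.+2 k.+3) => //; lia.
have yz_gt0 := mulr_gt0 y_gt0 z_gt0.
rewrite -(ler_pM2r yz_gt0).
have := ler_pM (mulr_ge0 (ge0 k) (ge0 k.+2)) (mulr_ge0 (ge0 k.+1) (ge0 k.+3))
          (lc k) (lc k.+1).
rewrite !expr2 => h; lra.
Qed.

Lemma prev_coef_ge0 k : 0 <= prev_coef p k.
Proof. by case: p_lc => ge0 _ _; case: k. Qed.

(* The mixed inequality a_(k-1) a_(k+2) <= a_k a_(k+1) needed for the
   log-concavity of (X + a) p, with a_(-1) = 0. *)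
Lemma lc_nz_prev k : prev_coef p k * p`_k.+2 <= p`_k * p`_k.+1.
Proof.
case: p_lc => ge0 _ _; case: k => [|k] /=; last exact: lc_nz_gap3.
by rewrite mul0r mulr_ge0.
Qed.

End LogConcaveFacts.

Section LinearFactor.
Variables (a : int) (p : {poly int}).
Hypotheses (a_gt0 : 0 < a) (p_lc : lc_nz p).

Lemma coef_mulXaddC_gt0 k :
  0 < (('X + a%:P) * p)`_k -> exists2 i, (i <= k <= i.+1)%N & 0 < p`_i.
Proof.
case: p_lc => ge0 _ _; rewrite coef_mulXaddC.
have := ge0 k; rewrite le0r => /orP[/eqP-> | pk_gt0]; last first.
  by exists k; rewrite ?leqnn ?leqnSn.
rewrite mulr0 addr0; case: k => [|k] /=; first by rewrite ltxx.
by move=> pk_gt0; exists k; rewrite ?leqnSn ?leqnn.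
Qed.

Lemma lc_nz_mulXaddC : lc_nz (('X + a%:P) * p).
Proof.
have [ge0 lc nz] := p_lc; have a_ge0 := ltW a_gt0.
split=> [k | k | i j l ij jl qi_gt0 ql_gt0].
- by rewrite coef_mulXaddC addr_ge0 ?prev_coef_ge0 ?mulr_ge0.
- rewrite !coef_mulXaddC.
  have h1 : a * (prev_coef p k * p`_k.+2) <= a * (p`_k * p`_k.+1).
    by rewrite ler_wpM2l ?lc_nz_prev.
  have h2 : a ^+ 2 * (p`_k * p`_k.+2) <= a ^+ 2 * p`_k.+1 ^+ 2.
    by rewrite ler_wpM2l ?exprn_ge0.
  have h3 : prev_coef p k * p`_k.+1 <= p`_k ^+ 2.
    by case: k {h1 h2} => [|k] /=; [rewrite mul0r sqr_ge0 | exact: lc].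
  have -> : prev_coef p k.+1 = p`_k by [].
  have -> : prev_coef p k.+2 = p`_k.+1 by [].
  have e1 : (p`_k + a * p`_k.+1) ^+ 2 = p`_k ^+ 2 + a * (p`_k * p`_k.+1)
      + a * (p`_k * p`_k.+1) + a ^+ 2 * p`_k.+1 ^+ 2 by ring.
  have e2 : (prev_coef p k + a * p`_k) * (p`_k.+1 + a * p`_k.+2) =
      prev_coef p k * p`_k.+1 + a * (prev_coef p k * p`_k.+2)
      + a * (p`_k * p`_k.+1) + a ^+ 2 * (p`_k * p`_k.+2) by ring.
  by rewrite e1 e2; lra.
- have [i0 /andP[i0i ii0] pi0_gt0] := coef_mulXaddC_gt0 qi_gt0.
  have [l0 /andP[l0l ll0] pl0_gt0] := coef_mulXaddC_gt0 ql_gt0.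
  have [jl0 | l0j] := leqP j l0; last by rewrite (_ : j = l) //; lia.
  have pj_gt0 : 0 < p`_j by apply: (nz i0 j l0) => //; lia.
  by rewrite coef_mulXaddC ltr_wpDl ?prev_coef_ge0 ?mulr_gt0.
Qed.

End LinearFactor.

Lemma lc_nz1 : lc_nz 1.
Proof.
split=> [k | k | i j l ij jl]; rewrite ?coef1.
- by case: (k == 0)%N.
- by case: k.
- by case: l jl => [|l] jl; [rewrite (_ : j = 0)%N //; lia | rewrite ltxx].
Qed.

Lemma lc_nz_mulXaddCn (a : int) (k : nat) (p : {poly int}) :
  0 < a -> lc_nz p -> lc_nz (('X + a%:P) ^+ k * p).
Proof.
move=> a_gt0 p_lc; elim: k => [|k IH]; first by rewrite expr0 mul1r.
by rewrite exprS -mulrA; apply: lc_nz_mulXaddC.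
Qed.

End LogConcavity.

Lemma bin2_mul n : 'C(n, 2) * 2 = n * n.-1.
Proof. by have := bin_ffact n 2; rewrite !ffactnS ffactn0 muln1. Qed.

Lemma bin3_mul n : 'C(n, 3) * 6 = n * n.-1 * n.-2.
Proof. by have := bin_ffact n 3; rewrite !ffactnS ffactn0 muln1 mulnA. Qed.

Section BinomialPolynomials.
Local Open Scope ring_scope.

Definition bin_poly (n : nat) : {poly int} := ('X + 1%:P) ^+ n.

Lemma coef_bin_poly n k : (bin_poly n)`_k = 'C(n, k)%:R.
Proof.
elim: n k => [|n IH] k; first by rewrite /bin_poly expr0 coef1 bin0n.
rewrite /bin_poly exprS coef_mulXaddC mul1r -/(bin_poly n) IH.
by case: k => [|k] /=; rewrite ?add0r ?bin0 // IH binS natrD addrC.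
Qed.

Lemma lc_nz_bin_poly n : lc_nz (bin_poly n).
Proof. by rewrite /bin_poly -[_ ^+ n]mulr1; apply: lc_nz_mulXaddCn lc_nz1. Qed.

Lemma binomial_lc n k : ('C(n, k) * 'C(n, k.+2) <= 'C(n, k.+1) ^ 2)%N.
Proof.
have [_ lc _] := lc_nz_bin_poly n.
by have := lc k; rewrite !coef_bin_poly -natrM -natrX ler_nat.
Qed.

Definition gpoly (m : nat) : {poly int} := bin_poly m.+1 + 'X^m.

Definition gcoef (m k : nat) : nat := ('C(m.+1, k) + (k == m))%N.

Lemma coef_gpoly m k : (gpoly m)`_k = (gcoef m k)%:R.
Proof. by rewrite /gpoly coefD coef_bin_poly coefXn /gcoef natrD. Qed.

(* Adding X^m to (X + 1)^(m+1) keeps the coefficients log-concave: only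
   the three inequalities around index m change, and they are checked via
   the closed forms of 'C(N, 2) and 'C(N, 3). *)
Lemma gcoef_lc m k : (gcoef m k * gcoef m k.+2 <= gcoef m k.+1 ^ 2)%N.
Proof.
rewrite /gcoef; have [<- | km] := eqVneq k m.
  by rewrite (@bin_small k.+1 k.+2) // (_ : (k.+2 == k) = false) ?muln0 //; lia.
have [<- | k1m] := eqVneq k.+1 m.
  rewrite binn binSn (_ : (k.+2 == k.+1) = false); last by lia.
  have -> : 'C(k.+2, k) = 'C(k.+2, 2) by rewrite -[RHS]bin_sub //; congr binomial; lia.
  have := bin2_mul k.+2; nia.
have [<- | k2m] := eqVneq k.+2 m.
  rewrite binSn.
  have -> : 'C(k.+3, k) = 'C(k.+3, 3) by rewrite -[RHS]bin_sub //; congr binomial; lia.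
  have -> : 'C(k.+3, k.+1) = 'C(k.+3, 2) by rewrite -[RHS]bin_sub //; congr binomial; lia.
  have := bin2_mul k.+3; have := bin3_mul k.+3; rewrite /=; nia.
rewrite !addn0; exact: binomial_lc.
Qed.

Lemma lc_nz_gpoly m : lc_nz (gpoly m).
Proof.
split=> [k | k | i j l _ jl _]; rewrite ?coef_gpoly.
- by rewrite ler0n.
- by rewrite -natrM -natrX ler_nat gcoef_lc.
- rewrite !ltr0n /gcoef !addn_gt0 !bin_gt0 => /orP[ll | /eqP lm]; lia.
Qed.

End BinomialPolynomials.

(* The coefficients of G_m^2 = (X + 1)^(2m+2) + 2 X^m (X + 1)^(m+1) + X^(2m). *)
Definition sqcoef (m k : nat) : nat :=
  'C(m.+1 + m.+1, k) + 2 * (if k < m then 0 else 'C(m.+1, k - m)) + (k == m + m).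

Lemma coef_gpoly_sqr m k : ((gpoly m ^+ 2)`_k = (sqcoef m k)%:R)%R.
Proof.
have -> : (gpoly m ^+ 2 = bin_poly (m.+1 + m.+1) + ('X^m * bin_poly m.+1) *+ 2
                          + 'X^(m + m))%R.
  rewrite /gpoly /bin_poly !exprD.
  set A := (('X + 1%:P) ^+ m.+1)%R; set B := ('X ^+ m)%R.
  ring.
rewrite !coefD !coefXnM !coef_bin_poly coefXn /sqcoef !natrD.
by case: (k < m); rewrite ?addr0.
Qed.

Lemma sqcoef_small m k : m.+1 + m.+1 < k -> sqcoef m k = 0.
Proof.
move=> mk; have km : k < m = false by apply/negbTE; rewrite -leqNgt; lia.
have kmm : (k == m + m) = false by apply/negbTE; rewrite neq_ltn; lia.
by rewrite /sqcoef km kmm !bin_small //; lia.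
Qed.

(* Up to index m + 1 the coefficients of G_m^2 increase: 'C(2m+2, i) does,
   and so do the two other terms. *)
Lemma sqcoef_incr m i : 0 < m -> i < m.+1 -> sqcoef m i <= sqcoef m i.+1.
Proof.
move=> m_gt0 im; rewrite /sqcoef.
have binom_up : 'C(m.+1 + m.+1, i) <= 'C(m.+1 + m.+1, i.+1).
  rewrite -(leq_pmul2l (ltn0Sn i)) mul_bin_left leq_mul2r; apply/orP; right; lia.
rewrite (_ : (i == m + m) = false) ?addn0; last by apply/negbTE; rewrite neq_ltn; lia.
apply: leq_trans (leq_addr _ _); apply: leq_add => //.
have [//|mi] := ltnP i m.
rewrite (_ : i = m) ?ltnn; last by lia.
by rewrite ltnNge leqnSn /= subnn subSnn bin0 bin1; lia.
Qed.

(* One term of Vandermonde's identity 'C(2n, n+t) = sum_j 'C(n, j) 'C(n, n+t-j). *)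
Lemma vandermonde_term n t : 'C(n, t.+2) * 'C(n, 2) <= 'C(n + n, n + t).
Proof.
have [tn|] := leqP t.+2 n; last by move=> /bin_small->.
rewrite -binomial.Vandermonde.
have ht : t.+2 < (n + t).+1 by lia.
rewrite (bigD1 (Ordinal ht)) //= (_ : n + t - t.+2 = n - 2); last by lia.
by rewrite bin_sub ?leq_addr //; lia.
Qed.

(* The numerical inequality behind the decrease, valid once n >= 8. *)
Lemma tail_weight_bound n t : 7 < n -> 3 * (n + t).+1 <= (t + t).+1 * 'C(n, 2).
Proof.
move=> n_ge8; rewrite -(leq_pmul2r (isT : 0 < 2)) -[X in _ <= X]mulnA bin2_mul.
have q_ge : 6 * (n + 1) <= n * n.-1 by nia.
have : t * 6 <= t * (n * n.-1) by rewrite leq_mul2l; apply/orP; right; lia.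
nia.
Qed.

(* Past the middle, 'C(2n, n+t+1) + 3 'C(n, t+2) <= 'C(2n, n+t), which
   absorbs the growth of the other two terms of sqcoef. *)
Lemma central_binomial_decay n t :
  7 < n -> 'C(n + n, (n + t).+1) + 3 * 'C(n, t.+2) <= 'C(n + n, n + t).
Proof.
move=> n_ge8; set X := 'C(n + n, n + t); set Y := 'C(n + n, (n + t).+1).
have eY : (n + t).+1 * Y = (n - t) * X.
  by rewrite mul_bin_left; congr (_ * _); lia.
rewrite -(leq_pmul2l (ltn0Sn (n + t))) mulnDr eY.
have [tn|] := leqP t.+2 n; last first.
  move=> /bin_small->; rewrite !muln0 addn0 leq_mul2r; apply/orP; right; lia.
have h : 3 * (n + t).+1 * 'C(n, t.+2) <= (t + t).+1 * X.
  apply: (@leq_trans ((t + t).+1 * 'C(n, 2) * 'C(n, t.+2))).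
    by rewrite leq_mul2r tail_weight_bound ?orbT.
  by rewrite -mulnA leq_mul2l mulnC vandermonde_term orbT.
have -> : (n + t).+1 * X = (n - t) * X + (t + t).+1 * X.
  by rewrite -mulnDl; congr (_ * _); lia.
by rewrite leq_add2l mulnA (mulnC _ 3).
Qed.

Lemma sqcoef_decr m i : 6 < m -> m.+1 <= i -> sqcoef m i.+1 <= sqcoef m i.
Proof.
move=> m_ge7 mi; have [t ->] : exists t, i = m.+1 + t by exists (i - m.+1); lia.
have lt1 : m.+1 + t < m = false by apply/negbTE; rewrite -leqNgt; lia.
have lt2 : (m.+1 + t).+1 < m = false by apply/negbTE; rewrite -leqNgt; lia.
have sub1 : m.+1 + t - m = t.+1 by lia.
have sub2 : (m.+1 + t).+1 - m = t.+2 by lia.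
rewrite /sqcoef lt1 lt2 sub1 sub2.
have decay := @central_binomial_decay m.+1 t ltac:(lia).
have delta_le : ((m.+1 + t).+1 == m + m) <= 'C(m.+1, t.+2).
  by case: eqP => // e; rewrite bin_gt0; lia.
lia.
Qed.

(* For m <= 6 all coefficients live below index 15; check them by computation. *)
Definition sqcoef_unimodal_upto (m : nat) : bool :=
  all (fun i => (i < m.+1) ==> (sqcoef m i <= sqcoef m i.+1)) (iota 0 15) &&
  all (fun i => (m.+1 <= i) ==> (sqcoef m i.+1 <= sqcoef m i)) (iota 0 15).

Lemma sqcoef_unimodal_small m : m <= 6 -> sqcoef_unimodal_upto m.
Proof. by do 7 (case: m => [|m]; first by move=> _; vm_compute). Qed.

Lemma sqcoef_unimodal m :
  (forall i, i < m.+1 -> sqcoef m i <= sqcoef m i.+1) /\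
  (forall i, m.+1 <= i -> sqcoef m i.+1 <= sqcoef m i).
Proof.
have [m_small | m_large] := leqP m 6; last first.
  by split=> i hi; [apply: sqcoef_incr => //; lia | exact: sqcoef_decr].
have /andP[/allP up /allP down] := sqcoef_unimodal_small m_small.
split=> i hi.
  have i_in : i \in iota 0 15 by rewrite mem_iota; lia.
  by move: (up i i_in); rewrite hi.
have [i15 | i15] := ltnP i 15; last by rewrite !sqcoef_small //; lia.
have i_in : i \in iota 0 15 by rewrite mem_iota.
by move: (down i i_in); rewrite hi.
Qed.

Lemma gpoly_sqr_unimodal m : unimodal (gpoly m ^+ 2).
Proof.
have [up down] := sqcoef_unimodal m.
by apply: (unimodal_at (m := m.+1)) => i hi; rewrite !coef_gpoly_sqr ler_nat ?up ?down.
Qed.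

Section GeneratingFunctions.
Local Open Scope ring_scope.

Lemma Dt_sum_tds (T : finType) (e : rel T) :
  Dt e = \sum_(D : {set T} | total_dominating e D) 'X^#|D|.
Proof.
rewrite /Dt (partition_big (fun D : {set T} => inord #|D| : 'I_#|T|.+1) predT) //=.
apply: eq_bigr => j _; rewrite scaler_nat /dt.
have cardD_lt (D : {set T}) : (#|D| < #|T|.+1)%N by rewrite ltnS max_card.
rewrite (eq_bigr (fun _ => 'X^j)); last by move=> D /andP[_ /eqP<-]; rewrite inordK.
rewrite sumr_const cardsE; congr (_ *+ _); apply: eq_card => D.
rewrite unfold_in /=; congr (_ && _); apply/eqP/eqP => [cardD | <-]; last by rewrite inordK.
by apply: val_inj; rewrite /= inordK.
Qed.

Definition xweight (b : bool) : {poly int} := if b then 'X else 1.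

Lemma Xn_card (T : finType) (A : {set T}) : 'X^#|A| = \prod_(x : T) xweight (x \in A).
Proof.
rewrite -prodr_const big_mkcond /=; apply: eq_bigr => x _.
by rewrite /xweight; case: (x \in A).
Qed.

Lemma sum_ffun_pointwise (I J : finType) (P : pred J) (W : J -> {poly int})
    (c : {poly int}) :
  \sum_(f : {ffun I -> J}) (if [forall i, P (f i)] then c * \prod_i W (f i) else 0)
  = c * (\sum_(s | P s) W s) ^+ #|I|.
Proof.
have -> : (\sum_(s | P s) W s) ^+ #|I| = \prod_(i : I) \sum_s (if P s then W s else 0).
  by rewrite prodr_const big_mkcond.
rewrite bigA_distr_bigA mulr_sumr; apply: eq_bigr => f _.
case: (boolP [forall i, P (f i)]) => [/forallP allP | /forallPn[i /negbTE notPi]].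
  by congr (_ * _); apply: eq_bigr => i _; rewrite allP.
by rewrite (bigD1 i) //= notPi mul0r mulr0.
Qed.

Lemma sum_bool2 (F : bool * bool -> {poly int}) :
  \sum_(s : bool * bool) F s =
  F (true, true) + F (true, false) + (F (false, true) + F (false, false)).
Proof.
rewrite (eq_bigr (fun s => (fun a b => F (a, b)) s.1 s.2)); last by case.
by rewrite -(pair_bigA _ (fun a b => F (a, b))) /= !big_bool.
Qed.

Lemma sum_bool3 (F : bool * bool * bool -> {poly int}) :
  \sum_(s : bool * bool * bool) F s = \sum_(s : bool * bool) (F (s, true) + F (s, false)).
Proof.
rewrite (eq_bigr (fun s => (fun a b => F (a, b)) s.1 s.2)); last by case.
by rewrite -(pair_bigA _ (fun a b => F (a, b))) /=; apply: eq_bigr => s _; rewrite big_bool.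
Qed.

Lemma prod_option (R : comNzRingType) (T : finType) (F : option T -> R) :
  \prod_(x : option T) F x = F None * \prod_(y : T) F (Some y).
Proof.
rewrite (bigD1 None) //=; congr (_ * _).
rewrite (reindex_omap Some (fun x => x)) /=; last by case.
by apply: eq_bigl => y; rewrite /= eqxx.
Qed.

End GeneratingFunctions.

Section BookGraph.
Variable n : nat.

Definition book_u : book_vertex n := inl (@Ordinal 2 0 isT).
Definition book_v : book_vertex n := inl (@Ordinal 2 1 isT).
Definition book_x (j : 'I_n) : book_vertex n := inr (j, false).
Definition book_y (j : 'I_n) : book_vertex n := inr (j, true).

(* A vertex set of B_n is coded by the memberships of u and v, and of
   x_j and y_j for each page j. *)
Definition book_code := ((bool * bool) * {ffun 'I_n -> bool * bool})%type.

Definition book_mem (z : book_code) (w : book_vertex n) : bool :=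
  match w with
  | inl i => if val i == 0 then z.1.1 else z.1.2
  | inr (j, s) => if s then (z.2 j).2 else (z.2 j).1
  end.

Definition book_set (z : book_code) : {set book_vertex n} := [set w | book_mem z w].

Definition book_code_of (D : {set book_vertex n}) : book_code :=
  ((book_u \in D, book_v \in D), [ffun j => (book_x j \in D, book_y j \in D)]).

Lemma book_setK : cancel book_set book_code_of.
Proof.
case=> [[a b] f]; rewrite /book_code_of /book_set !inE /=; congr (_, _).
by apply/ffunP => j; rewrite ffunE !inE /=; case: (f j).
Qed.

Lemma book_code_ofK : cancel book_code_of book_set.
Proof.
move=> D; apply/setP => w; rewrite /book_set inE.
case: w => [[[|[|k]] hk] | [j [|]]] //=; rewrite ?ffunE //=;
  by rewrite /book_u /book_v (bool_irrelevance hk isT).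
Qed.

(* The condition for a vertex w to have a neighbour in book_set z:
   N(u) = {v, x_j}, N(v) = {u, y_j}, N(x_j) = {u, y_j}, N(y_j) = {v, x_j}. *)
Definition book_dom (z : book_code) (w : book_vertex n) : bool :=
  match w with
  | inl i => if val i == 0 then z.1.2 || [exists j, (z.2 j).1]
             else z.1.1 || [exists j, (z.2 j).2]
  | inr (j, s) => if s then z.1.2 || (z.2 j).1 else z.1.1 || (z.2 j).2
  end.

Lemma book_dominated z w :
  [exists y in book_set z, book_adj w y] = book_dom z w.
Proof.
case: z => [[a b] f]; apply/existsP/idP => [[y /andP[]] | ].
  rewrite inE; case: w => [[[|[|k]] hk] | [j [|]]] //;
  case: y => [[[|[|k']] hk'] | [j' [|]]] //= yin;
  rewrite /book_adj /= ?andbT ?andbF ?orbF ?orFb //;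
  try (by rewrite yin); try (by move=> _; apply/orP; right; apply/existsP; exists j');
  by move=> /eqP e; subst; rewrite yin orbT.
case: w => [[[|[|k]] hk] | [j [|]]] //=.
- by case/orP=> [h | /existsP[j h]]; [exists book_v | exists (book_x j)];
    rewrite inE /= h.
- by case/orP=> [h | /existsP[j h]]; [exists book_u | exists (book_y j)];
    rewrite inE /= h.
- by case/orP=> h; [exists book_v | exists (book_x j)];
    rewrite inE /= h /book_adj /= ?eqxx ?orbT.
- by case/orP=> h; [exists book_u | exists (book_y j)];
    rewrite inE /= h /book_adj /= ?eqxx ?orbT.
Qed.

(* For n >= 1, total domination reduces to two conditions per page:
   x_j is dominated (u or y_j chosen) and y_j is dominated (v or x_j chosen);
   u and v are then dominated through any page. *)
Lemma book_tds (n_gt0 : 0 < n) (z : book_code) :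
  total_dominating (@book_adj n) (book_set z) =
  [forall j, (z.1.1 || (z.2 j).2) && (z.1.2 || (z.2 j).1)].
Proof.
case: z => [[a b] f]; rewrite /total_dominating.
apply/forallP/forallP => /= dom.
  move=> j; have := dom (book_x j); have := dom (book_y j).
  by rewrite !book_dominated /= => -> ->.
pose j0 := Ordinal n_gt0; have /andP[dom_x0 dom_y0] := dom j0.
case=> [[[|[|k]] hk] | [j [|]]]; rewrite book_dominated //=.
- by case/orP: dom_y0 => [-> // | h]; apply/orP; right; apply/existsP; exists j0.
- by case/orP: dom_x0 => [-> // | h]; apply/orP; right; apply/existsP; exists j0.
- by case/andP: (dom j).
- by case/andP: (dom j).
Qed.

Local Open Scope ring_scope.

Lemma book_weight (z : book_code) : 'X^#|book_set z| =
  xweight z.1.1 * xweight z.1.2 * \prod_(j : 'I_n) (xweight (z.2 j).1 * xweight (z.2 j).2).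
Proof.
rewrite Xn_card big_sumType /= !big_ord_recl big_ord0 mulr1.
rewrite (eq_bigr (fun p : 'I_n * bool =>
   (fun j s => xweight (inr (j, s) \in book_set z)) p.1 p.2)); last by case.
rewrite -(pair_bigA _ (fun j s => xweight (inr (j, s) \in book_set z))) /=.
congr (_ * _); first by rewrite /book_set !inE.
by apply: eq_bigr => j _; rewrite big_bool /book_set !inE /= mulrC.
Qed.

Lemma book_Dt_sum (n_gt0 : (0 < n)%N) : Dt (@book_adj n) =
  \sum_(ab : bool * bool) xweight ab.1 * xweight ab.2 *
    (\sum_(s : bool * bool | (ab.1 || s.2) && (ab.2 || s.1))
        xweight s.1 * xweight s.2) ^+ n.
Proof.
rewrite Dt_sum_tds (reindex book_set); last first.
  by exists book_code_of => z _; [apply: book_setK | apply: book_code_ofK].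
rewrite big_mkcond /= -(pair_bigA _ (fun ab (f : {ffun 'I_n -> bool * bool}) =>
  if total_dominating (@book_adj n) (book_set (ab, f)) then 'X^#|book_set (ab, f)| else 0)).
apply: eq_bigr => ab _; rewrite -[X in _ ^+ X](card_ord n) -sum_ffun_pointwise.
by apply: eq_bigr => f _; rewrite book_tds // book_weight.
Qed.

End BookGraph.

Section FriendshipGraph.
Variable n : nat.

Definition friend_w (j : 'I_n) (t : nat) (ht : t < 3) : friend_vertex n :=
  Some (j, Ordinal ht).

(* A vertex set of F_{n,4} is coded by the membership of the centre and of
   the three other vertices (j,0), (j,1), (j,2) of each cycle j. *)
Definition friend_code := (bool * {ffun 'I_n -> bool * bool * bool})%type.

Definition friend_mem (z : friend_code) (w : friend_vertex n) : bool :=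
  match w with
  | None => z.1
  | Some (j, t) => if val t == 0 then (z.2 j).1.1
                   else if val t == 1 then (z.2 j).1.2 else (z.2 j).2
  end.

Definition friend_set (z : friend_code) : {set friend_vertex n} :=
  [set w | friend_mem z w].

Definition friend_code_of (D : {set friend_vertex n}) : friend_code :=
  (None \in D, [ffun j => (friend_w j (isT : 0 < 3) \in D,
                          friend_w j (isT : 1 < 3) \in D, friend_w j (isT : 2 < 3) \in D)]).

Lemma friend_setK : cancel friend_set friend_code_of.
Proof.
case=> [c f]; rewrite /friend_code_of /friend_set !inE /=; congr (_, _).
by apply/ffunP => j; rewrite ffunE !inE /=; case: (f j) => [[]].
Qed.

Lemma friend_code_ofK : cancel friend_code_of friend_set.
Proof.
move=> D; apply/setP => w; rewrite /friend_set inE.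
case: w => [[j [[|[|[|k]]] ht]] |] //=; rewrite ?ffunE //=;
  by rewrite /friend_w (bool_irrelevance ht isT).
Qed.

(* The condition for a vertex w to have a neighbour in friend_set z:
   the centre needs some (j,0) or (j,2); (j,1) needs (j,0) or (j,2);
   (j,0) and (j,2) need the centre or (j,1). *)
Definition friend_dom (z : friend_code) (w : friend_vertex n) : bool :=
  match w with
  | None => [exists j, (z.2 j).1.1 || (z.2 j).2]
  | Some (j, t) => if val t == 1 then (z.2 j).1.1 || (z.2 j).2
                   else z.1 || (z.2 j).1.2
  end.

Lemma friend_dominated z w :
  [exists y in friend_set z, friend_adj w y] = friend_dom z w.
Proof.
case: z => [c f]; apply/existsP/idP => [[y /andP[]] | ].
  rewrite inE; case: w => [[j [[|[|[|k]]] ht]] |] //;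
  case: y => [[j' [[|[|[|k']]] ht']] |] //= yin;
  rewrite /friend_adj /= ?andbT ?andbF ?orbF ?orFb //;
  try (by move=> _; rewrite yin);
  try (by move=> _; apply/existsP; exists j'; rewrite yin ?orbT);
  by move=> /eqP e; subst; rewrite yin ?orbT.
case: w => [[j [[|[|[|k]]] ht]] |] //=.
- by case/orP=> h; [exists None | exists (friend_w j (isT : 1 < 3))];
    rewrite inE /= h /friend_adj /= ?eqxx.
- by case/orP=> h; [exists (friend_w j (isT : 0 < 3)) | exists (friend_w j (isT : 2 < 3))];
    rewrite inE /= h /friend_adj /= ?eqxx ?orbT.
- by case/orP=> h; [exists None | exists (friend_w j (isT : 1 < 3))];
    rewrite inE /= h /friend_adj /= ?eqxx ?orbT.
- case/existsP=> j /orP[] h;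
    [exists (friend_w j (isT : 0 < 3)) | exists (friend_w j (isT : 2 < 3))];
    by rewrite inE /= h.
Qed.

(* For n >= 1, total domination reduces to two conditions per cycle: (j,0)
   and (j,2) are dominated (centre or (j,1) chosen), and (j,1) is dominated
   ((j,0) or (j,2) chosen); the centre is then dominated through any cycle. *)
Lemma friend_tds (n_gt0 : 0 < n) (z : friend_code) :
  total_dominating (@friend_adj n) (friend_set z) =
  [forall j, (z.1 || (z.2 j).1.2) && ((z.2 j).1.1 || (z.2 j).2)].
Proof.
case: z => [c f]; rewrite /total_dominating.
apply/forallP/forallP => /= dom.
  move=> j; have := dom (friend_w j (isT : 0 < 3)).
  have := dom (friend_w j (isT : 1 < 3)).
  by rewrite !friend_dominated /= => -> ->.
case=> [[j [[|[|[|k]]] ht]] |]; rewrite friend_dominated //=.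
- by case/andP: (dom j).
- by case/andP: (dom j).
- by case/andP: (dom j).
- pose j0 := Ordinal n_gt0; have /andP[_ dom0] := dom j0.
  by apply/existsP; exists j0.
Qed.

Local Open Scope ring_scope.

Lemma friend_weight (z : friend_code) : 'X^#|friend_set z| =
  xweight z.1 * \prod_(j : 'I_n)
    (xweight (z.2 j).1.1 * xweight (z.2 j).1.2 * xweight (z.2 j).2).
Proof.
rewrite Xn_card prod_option.
rewrite (eq_bigr (fun p : 'I_n * 'I_3 =>
   (fun j t => xweight (Some (j, t) \in friend_set z)) p.1 p.2)); last by case.
rewrite -(pair_bigA _ (fun j t => xweight (Some (j, t) \in friend_set z))) /=.
congr (_ * _); first by rewrite /friend_set !inE.
apply: eq_bigr => j _; rewrite !big_ord_recl big_ord0 mulr1 /friend_set !inE /=.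
by rewrite mulrA.
Qed.

Lemma friend_Dt_sum (n_gt0 : (0 < n)%N) : Dt (@friend_adj n) =
  \sum_(c : bool) xweight c *
    (\sum_(s : bool * bool * bool | (c || s.1.2) && (s.1.1 || s.2))
        xweight s.1.1 * xweight s.1.2 * xweight s.2) ^+ n.
Proof.
rewrite Dt_sum_tds (reindex friend_set); last first.
  by exists friend_code_of => z _; [apply: friend_setK | apply: friend_code_ofK].
rewrite big_mkcond /= -(pair_bigA _ (fun c (f : {ffun 'I_n -> bool * bool * bool}) =>
  if total_dominating (@friend_adj n) (friend_set (c, f))
  then 'X^#|friend_set (c, f)| else 0)).
apply: eq_bigr => c _; rewrite -[X in _ ^+ X](card_ord n) -sum_ffun_pointwise.
by apply: eq_bigr => f _; rewrite friend_tds // friend_weight.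
Qed.

End FriendshipGraph.

Local Open Scope ring_scope.

(* D_t(B_(m+1), x) = x^2 G_m(x)^2: the four choices for (u, v) contribute
   x^2 (x+1)^(2m+2), twice x (x (x+1))^(m+1), and x^(2m+2). *)
Lemma book_Dt m : Dt (@book_adj m.+1) = 'X^2 * gpoly m ^+ 2.
Proof.
rewrite book_Dt_sum // sum_bool2 /=.
do 4 rewrite big_mkcond sum_bool2 /=.
rewrite /xweight /gpoly /bin_poly !(mulr1, mul1r, addr0, add0r).
set Y := 'X + 1%:P.
have -> : 'X * 'X + 'X + ('X + 1) = Y ^+ 2 by rewrite /Y polyC1; ring.
have -> : 'X * 'X + 'X = 'X * Y by rewrite /Y polyC1; ring.
rewrite -exprM mulnC exprM !exprMn !exprS.
set A := Y ^+ m; set B := 'X ^+ m.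
ring.
Qed.

(* D_t(F_(m+1,4), x) = x^(m+2) (x+2)^(m+1) G_m(x): the centre in or out
   contributes x (x (x+1) (x+2))^(m+1) or (x^2 (x+2))^(m+1). *)
Lemma friend_Dt m :
  Dt (@friend_adj m.+1) = 'X^(m.+2) * (('X + 2%:P) ^+ m.+1 * gpoly m).
Proof.
rewrite friend_Dt_sum // big_bool /=.
do 2 rewrite big_mkcond sum_bool3 sum_bool2 /=.
rewrite /xweight /gpoly /bin_poly !(mulr1, mul1r, addr0, add0r).
have two : (2%:P : {poly int}) = 1 + 1 by rewrite -polyC1 -polyCD.
rewrite two polyC1; set Z := 'X + (1 + 1); set Y := 'X + 1.
have -> : 'X * 'X * 'X + 'X * 'X + ('X * 'X + 'X) + ('X * 'X + 'X) = 'X * Y * Z.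
  by rewrite /Y /Z; ring.
have -> : 'X * 'X * 'X + 'X * 'X + 'X * 'X = 'X * 'X * Z by rewrite /Z; ring.
rewrite !exprMn !exprS.
set A := Y ^+ m; set B := 'X ^+ m; set C := Z ^+ m.
ring.
Qed.

Theorem mainTheorem10 (n : nat) (hn : (1 <= n)%N) :
  unimodal (Dt (@book_adj n)) /\ unimodal (Dt (@friend_adj n)).
Proof.
case: n hn => [// | m] _.
have gpoly_sqr_ge0 k : 0 <= (gpoly m ^+ 2)`_k by rewrite coef_gpoly_sqr ler0n.
split.
- by rewrite book_Dt; apply: unimodal_mulXn (gpoly_sqr_unimodal m).
- have lc := @lc_nz_mulXaddCn 2 m.+1 _ (ltr0Sn _ 1) (lc_nz_gpoly m).
  have [lc_ge0 _ _] := lc.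
  by rewrite friend_Dt; apply: unimodal_mulXn (lc_nz_unimodal lc).
Qed.
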